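(* Let $j\in GL_2(\mathbb{Q}_p)$ with $\mathrm{tr}\,j=0$ and $-\det j=\varepsilon p^\alpha$, $\varepsilon\in\mathbb{Z}_p^\times$, $\alpha\in\mathbb Z$. For a lattice $\Lambda\subset\mathbb{Q}_p^2$ put $m_{[\Lambda]}(j)=\max\{r\in\mathbb{Z}:j(\Lambda)\subset p^r\Lambda\}$. Then $m_{[\Lambda]}(j)=\alpha/2-d([\Lambda],\mathcal{B}^j)$.
   Context: $\mathcal{B}$ denotes the Bruhat–Tits tree of $PGL_2(\mathbb{Q}_p)$ ($p>2$): vertices are homothety classes $[\Lambda]$ of $\mathbb{Z}_p$-lattices in $\mathbb{Q}_p^2$, regarded as a metric tree (each edge of length $1$, including midpoints of edges) with distance $d$. A trace-zero $j\in GL_2(\mathbb{Q}_p)$ acts on $\mathcal{B}$ via $[\Lambda]\mapsto[j\Lambda]$ as an involution; $\mathcal{B}^j$ is its fixed point set. *)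

From mathcomp Require Import all_boot all_order all_algebra.
Set Implicit Arguments. Unset Strict Implicit. Unset Printing Implicit Defensive.
Import Order.TTheory GRing.Theory Num.Theory.
Local Open Scope ring_scope.

(* The field Q_p.  MathComp has no p-adic numbers, so Q_p is given by  *)
(* a characterization determining it up to (valuation-preserving)      *)
(* isomorphism: a field K with a discrete valuation v : K -> int       *)
(* (v is only meaningful on nonzero elements) such that v(p) = 1, the  *)
(* residue field is F_p (every integral element is congruent mod p to  *)
(* one of 0,...,p-1), and K is complete for v.                          *)

Definition vclose (K : fieldType) (v : K -> int) (N : int) (a b : K) : Prop :=
  a - b = 0 \/ (N <= v (a - b))%R.

Definition is_Qp (p : nat) (K : fieldType) (v : K -> int) : Prop :=
  [/\ (forall x y : K, x != 0 -> y != 0 -> v (x * y) = v x + v y),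
      (forall x y : K, x != 0 -> y != 0 -> x + y != 0 ->
          (Num.min (v x) (v y) <= v (x + y))%R),
      (p%:R : K) != 0 /\ v p%:R = 1,
      (forall x : K, x != 0 -> (0 <= v x)%R ->
          exists2 k : nat, (k < p)%N & vclose v 1 x k%:R) &
      (forall u : nat -> K,
          (forall N : int, exists M : nat, forall m n : nat,
               (M <= m)%N -> (M <= n)%N -> vclose v N (u m) (u n)) ->
          exists l : K, forall N : int, exists M : nat, forall n : nat,
               (M <= n)%N -> vclose v N (u n) l)].

Definition integral (K : fieldType) (v : K -> int) (a : K) : Prop :=
  a = 0 \/ (0 <= v a)%R.
Definition is_Zp_unit (K : fieldType) (v : K -> int) (a : K) : Prop :=
  a != 0 /\ v a = 0.

Definition vec (K : fieldType) := 'cV[K]_2.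
Definition vset (K : fieldType) := vec K -> Prop.

Definition is_lattice (K : fieldType) (v : K -> int) (L : vset K) : Prop :=
  exists2 g : 'M[K]_2, g \in unitmx &
    forall x : vec K, L x <-> exists2 y : vec K,
        (forall i, integral v (y i 0)) & x = g *m y.

Definition scale_set (K : fieldType) (c : K) (L : vset K) : vset K :=
  fun x => exists2 y, L y & x = c *: y.
Definition act_set (K : fieldType) (g : 'M[K]_2) (L : vset K) : vset K :=
  fun x => exists2 y, L y & x = g *m y.

Definition set_eq (K : fieldType) (A B : vset K) : Prop := forall x, A x <-> B x.
Definition set_sub (K : fieldType) (A B : vset K) : Prop := forall x, A x -> B x.
Definition set_ssub (K : fieldType) (A B : vset K) : Prop :=
  set_sub A B /\ exists2 x, B x & ~ A x.

Definition homot (K : fieldType) (L L' : vset K) : Prop :=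
  exists2 c : K, c != 0 & set_eq L' (scale_set c L).

Definition adj (p : nat) (K : fieldType) (v : K -> int) (L L' : vset K) : Prop :=
  exists L'' : vset K, [/\ is_lattice v L'', homot L' L'',
     set_ssub (scale_set (p%:R) L) L'' & set_ssub L'' L].

Fixpoint bt_path (p : nat) (K : fieldType) (v : K -> int) (n : nat)
  (L L' : vset K) : Prop :=
  match n with
  | 0 => homot L L'
  | n.+1 => exists L1 : vset K,
      [/\ is_lattice v L1, adj p v L L1 & bt_path p v n L1 L']
  end.

Definition vdist (p : nat) (K : fieldType) (v : K -> int) (L L' : vset K)
  (n : nat) : Prop :=
  bt_path p v n L L' /\ forall k, (k < n)%N -> ~ bt_path p v k L L'.

Inductive btpoint (K : fieldType) :=
  | BVert of vset K
  | BMid of vset K & vset K.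

Definition is_btpoint (p : nat) (K : fieldType) (v : K -> int)
  (P : btpoint K) : Prop :=
  match P with
  | BVert a => is_lattice v a
  | BMid a b => [/\ is_lattice v a, is_lattice v b & adj p v a b]
  end.

(* twice the distance from the vertex [L] to the point P (half-edge units) *)
Definition pdist2 (p : nat) (K : fieldType) (v : K -> int) (L : vset K)
  (P : btpoint K) (n : nat) : Prop :=
  match P with
  | BVert a => exists2 k, vdist p v L a k & n = (2 * k)%N
  | BMid a b => exists ka kb, [/\ vdist p v L a ka, vdist p v L b kb &
                               n = (2 * minn ka kb).+1]
  end.

Definition bt_fixed (K : fieldType) (j : 'M[K]_2) (P : btpoint K) : Prop :=
  match P with
  | BVert a => homot a (act_set j a)
  | BMid a b => (homot a (act_set j a) /\ homot b (act_set j b)) \/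
                (homot b (act_set j a) /\ homot a (act_set j b))
  end.

Definition dist2_to_fixed (p : nat) (K : fieldType) (v : K -> int)
  (j : 'M[K]_2) (L : vset K) (n : nat) : Prop :=
  (exists P : btpoint K, [/\ is_btpoint p v P, bt_fixed j P & pdist2 p v L P n])
  /\ (forall (P : btpoint K) (k : nat),
        is_btpoint p v P -> bt_fixed j P -> pdist2 p v L P k -> (n <= k)%N).

Definition jsub (p : nat) (K : fieldType) (j : 'M[K]_2) (L : vset K) (r : int)
  : Prop := set_sub (act_set j L) (scale_set ((p%:R : K) ^ r) L).

Definition is_mL (p : nat) (K : fieldType) (j : 'M[K]_2) (L : vset K) (m : int)
  : Prop := jsub p j L m /\ forall r : int, jsub p j L r -> (r <= m)%R.

(* Choose a basis g of the lattice and pull out the largest power of p: g^-1 j g = p^m N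
   with N = [[a, b], [c, -a]] integral and with a unit entry, so m = m_[L](j) and
   a^2 + bc = eps p^(alpha-2m).  If alpha = 2m, [L] itself is fixed.  Otherwise b or c is a
   unit, N is Z_p-conjugate to the companion matrix of X^2 - eps p^(alpha-2m), and j reflects
   the apartment of the new basis about its point at distance (alpha-2m)/2 from [L].
   Conversely, if j maps a vertex at distance k from [L] onto (a neighbour of) its own class,
   comparing covolumes shows that j shrinks that vertex by p^(alpha/2) (resp. p^((alpha-1)/2));
   transporting this inclusion back along the path bounds m from below. *)

From mathcomp Require Import all_boot all_order all_algebra zify ring.
From Stdlib Require Import Classical FunctionalExtensionality PropExtensionality.
Set Implicit Arguments. Unset Strict Implicit. Unset Printing Implicit Defensive.
Import Order.TTheory GRing.Theory Num.Theory.
Local Open Scope ring_scope.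

Section Matrix22.
Variable K : fieldType.

Definition mx22 (a b c d : K) : 'M[K]_2 :=
  \matrix_(i, j) if i == 0 then (if j == 0 then a else b)
                 else (if j == 0 then c else d).

Definition diag2 (a b : K) : 'M[K]_2 := mx22 a 0 0 b.

Lemma ord2_ind (P : 'I_2 -> Prop) : P 0 -> P 1 -> forall i, P i.
Proof.
move=> P0 P1 [[|[|//]] lti]; first by rewrite (_ : Ordinal lti = 0) //; apply/val_inj.
by rewrite (_ : Ordinal lti = 1) //; apply/val_inj.
Qed.

Lemma sum_ord2 (F : 'I_2 -> K) : \sum_i F i = F 0 + F 1.
Proof. by rewrite big_ord_recl big_ord1; congr (_ + F _); apply/val_inj. Qed.

Lemma mx22E (M : 'M[K]_2) : M = mx22 (M 0 0) (M 0 1) (M 1 0) (M 1 1).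
Proof. by apply/matrixP; elim/ord2_ind; elim/ord2_ind; rewrite !mxE. Qed.

Lemma mx22_1 : 1%:M = mx22 1 0 0 1.
Proof. by apply/matrixP; elim/ord2_ind; elim/ord2_ind; rewrite !mxE. Qed.

Lemma mul_mx22 a b c d a' b' c' d' :
  mx22 a b c d *m mx22 a' b' c' d' =
  mx22 (a * a' + b * c') (a * b' + b * d') (c * a' + d * c') (c * b' + d * d').
Proof.
by apply/matrixP; elim/ord2_ind; elim/ord2_ind; rewrite !mxE sum_ord2 !mxE.
Qed.

Lemma scale_mx22 x a b c d :
  x *: mx22 a b c d = mx22 (x * a) (x * b) (x * c) (x * d).
Proof. by apply/matrixP; elim/ord2_ind; elim/ord2_ind; rewrite !mxE. Qed.

Lemma det_mx22 a b c d : \det (mx22 a b c d) = a * d - b * c.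
Proof.
rewrite (expand_det_row _ 0) sum_ord2 /cofactor !det_mx11 !mxE /=.
by rewrite expr0 expr1 mul1r mulN1r mulrN.
Qed.

Lemma tr_mx22 a b c d : \tr (mx22 a b c d) = a + d.
Proof. by rewrite /mxtrace sum_ord2 !mxE. Qed.

Lemma mul_mx22_adj a b c d :
  mx22 a b c d *m mx22 d (- b) (- c) a = (a * d - b * c)%:M.
Proof. by rewrite mul_mx22 -scalemx1 mx22_1 scale_mx22; congr mx22; ring. Qed.

Lemma unitmx22_diag a b : a != 0 -> b != 0 -> diag2 a b \in unitmx.
Proof. by move=> a0 b0; rewrite unitmxE det_mx22 mulr0 subr0 unitfE mulf_neq0. Qed.

End Matrix22.

Lemma set_eqE (K : fieldType) (A B : vset K) : set_eq A B -> A = B.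
Proof.
by move=> eqAB; apply: functional_extensionality => x; apply/propositional_extensionality.
Qed.

Lemma set_sub_trans (K : fieldType) (A B C : vset K) :
  set_sub A B -> set_sub B C -> set_sub A C.
Proof. by move=> sAB sBC x /sAB /sBC. Qed.

Lemma set_ssubP (K : fieldType) (A B : vset K) :
  set_sub A B -> ~ set_sub B A -> set_ssub A B.
Proof.
move=> sAB nsBA; split=> //; apply: NNPP => nx; apply: nsBA => x Bx.
by apply: NNPP => nAx; apply: nx; exists x.
Qed.

Lemma scale_set_sub (K : fieldType) (c : K) (A B : vset K) :
  set_sub A B -> set_sub (scale_set c A) (scale_set c B).
Proof. by move=> sAB x [y Ay ->]; exists y => //; apply: sAB. Qed.

Lemma scale_setM (K : fieldType) (c d : K) (A : vset K) :
  scale_set c (scale_set d A) = scale_set (c * d) A.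
Proof.
apply: set_eqE => x; split; first by case=> _ [y Ay ->] ->; exists y; rewrite ?scalerA.
by case=> y Ay ->; exists (d *: y); [exists y | rewrite scalerA].
Qed.

Lemma scale_set1 (K : fieldType) (A : vset K) : scale_set 1 A = A.
Proof.
apply: set_eqE => x; split; first by case=> y Ay ->; rewrite scale1r.
by exists x; rewrite ?scale1r.
Qed.

Lemma scale_setK (K : fieldType) (c : K) (A : vset K) :
  c != 0 -> scale_set c^-1 (scale_set c A) = A.
Proof. by move=> c0; rewrite scale_setM mulVf // scale_set1. Qed.

Section ValuedField.
Variables (K : fieldType) (v : K -> int).
Hypothesis valM : forall x y : K, x != 0 -> y != 0 -> v (x * y) = v x + v y.
Hypothesis valD : forall x y : K, x != 0 -> y != 0 -> x + y != 0 ->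
  Num.min (v x) (v y) <= v (x + y).

Lemma val1 : v 1 = 0.
Proof. by have := valM (oner_neq0 K) (oner_neq0 K); rewrite mulr1; set x := v 1; lia. Qed.

Lemma valV x : x != 0 -> v x^-1 = - v x.
Proof. by move=> x0; have := valM x0 (invr_neq0 x0); rewrite mulfV // val1; lia. Qed.

Lemma valN x : x != 0 -> v (- x) = v x.
Proof.
have N10 : (-1 : K) != 0 by rewrite oppr_eq0 oner_neq0.
have := valM N10 N10; rewrite mulrNN mulr1 val1 => vN1.
by move=> x0; rewrite -mulN1r valM // (_ : v (-1) = 0) ?add0r //; lia.
Qed.

Lemma val_sqr x : x != 0 -> v (x ^+ 2) = 2 * v x.
Proof. by move=> x0; rewrite expr2 valM //; lia. Qed.

Lemma valD_lt x y : x != 0 -> y != 0 -> x + y != 0 -> v x < v y ->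
  v (x + y) = v x.
Proof.
move=> x0 y0 s0 lt_xy; have Ny0 : - y != 0 by rewrite oppr_eq0.
apply/le_anti/andP; split; last by rewrite -(min_l (ltW lt_xy)) valD.
have := valD s0 Ny0; rewrite addrK valN // => /(_ x0).
by rewrite ge_min [v y <= _]leNgt lt_xy orbF.
Qed.

Lemma integral0 : integral v 0. Proof. by left. Qed.

Lemma integral1 : integral v 1. Proof. by right; rewrite val1. Qed.

Lemma integral_val a : a != 0 -> integral v a -> 0 <= v a.
Proof. by move=> a0 [a_eq0|//]; rewrite a_eq0 eqxx in a0. Qed.

Lemma integralM a b : integral v a -> integral v b -> integral v (a * b).
Proof.
have [->|a0] := eqVneq a 0; first by rewrite mul0r; left.
have [->|b0] := eqVneq b 0; first by rewrite mulr0; left.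
move=> /(integral_val a0) va /(integral_val b0) vb.
by right; rewrite valM //; lia.
Qed.

Lemma integralN a : integral v a -> integral v (- a).
Proof.
have [->|a0] := eqVneq a 0; first by rewrite oppr0; left.
by move=> /(integral_val a0) va; right; rewrite valN.
Qed.

Lemma integralD a b : integral v a -> integral v b -> integral v (a + b).
Proof.
have [->|a0] := eqVneq a 0; first by rewrite add0r.
have [->|b0] := eqVneq b 0; first by rewrite addr0.
have [->|s0] := eqVneq (a + b) 0; first by left.
move=> /(integral_val a0) va /(integral_val b0) vb.
by right; have := valD a0 b0 s0; rewrite /Num.min; case: ifP; lia.
Qed.

Lemma integralB a b : integral v a -> integral v b -> integral v (a - b).
Proof. by move=> ia ib; apply/integralD/integralN. Qed.

Lemma has_min_val (s : seq K) : has (fun x => x != 0) s ->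
  exists2 x, (x \in s) && (x != 0) & forall y, y \in s -> y != 0 -> v x <= v y.
Proof.
elim: s => [//|x s IH] /=.
have [x0|x0] /= := eqVneq x 0.
  move=> /IH[y /andP[ys y0] ymin]; exists y; first by rewrite inE ys orbT.
  by move=> z; rewrite inE => /predU1P[->|/ymin//]; rewrite x0 eqxx.
case hs : (has _ s) => _.
  have [y /andP[ys y0] ymin] := IH hs.
  have [le_xy|lt_yx] := lerP (v x) (v y).
    exists x; first by rewrite mem_head.
    by move=> z; rewrite inE => /predU1P[->//|zs z0]; apply/(le_trans le_xy)/ymin.
  exists y; first by rewrite inE ys orbT.
  by move=> z; rewrite inE => /predU1P[-> _|/ymin//]; apply: ltW.
exists x; first by rewrite mem_head.
move=> z; rewrite inE => /predU1P[->//|zs z0].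
by move/negbT/hasPn: hs => /(_ z zs); rewrite z0.
Qed.

Variable p : nat.
Hypothesis p_neq0 : (p%:R : K) != 0.
Hypothesis val_p : v p%:R = 1.
Local Notation pi := (p%:R : K).

Lemma expfz_p_neq0 (r : int) : pi ^ r != 0.
Proof. exact: expfz_neq0. Qed.

Lemma val_expfz_p (r : int) : v (pi ^ r) = r.
Proof.
have val_exp n : v (pi ^+ n) = n.
  elim: n => [|n IHn]; first by rewrite expr0 val1.
  by rewrite exprS valM ?IHn ?val_p ?expf_neq0 //; lia.
case: r => n; first by rewrite -exprnP val_exp.
by rewrite NegzE -invr_expz valV -?exprnP ?val_exp // expf_neq0.
Qed.

Definition intvec (y : 'cV[K]_2) := forall i, integral v (y i 0).
Definition intmx (X : 'M[K]_2) := forall i j, integral v (X i j).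

Definition latt (g : 'M[K]_2) : vset K :=
  fun x => exists2 y : vec K, intvec y & x = g *m y.

Lemma intmx22 a b c d : integral v a -> integral v b -> integral v c ->
  integral v d -> intmx (mx22 a b c d).
Proof. by move=> ia ib ic id; elim/ord2_ind; elim/ord2_ind; rewrite mxE. Qed.

Lemma intmx_diag a b : integral v a -> integral v b -> intmx (diag2 a b).
Proof. by move=> ia ib; apply: intmx22 => //; apply: integral0. Qed.

Lemma intmx_mulcol X y : intmx X -> intvec y -> intvec (X *m y).
Proof. by move=> iX iy i; rewrite mxE sum_ord2; apply: integralD; apply: integralM. Qed.

Lemma intmx_det X : intmx X -> integral v (\det X).
Proof.
by move=> iX; rewrite (mx22E X) det_mx22; apply: integralB; apply: integralM.
Qed.

Lemma latticeE L : is_lattice v L -> exists2 g, g \in unitmx & L = latt g.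
Proof. by case=> g g_unit eqL; exists g => //; apply: set_eqE. Qed.

Lemma latt_lattice g : g \in unitmx -> is_lattice v (latt g).
Proof. by exists g. Qed.

Lemma scale_latt c g : scale_set c (latt g) = latt (c *: g).
Proof.
apply: set_eqE => x; split; first by case=> _ [y iy ->] ->; exists y; rewrite ?scalemxAl.
by case=> y iy ->; exists (g *m y); [exists y | rewrite scalemxAl].
Qed.

Lemma act_latt j g : act_set j (latt g) = latt (j *m g).
Proof.
apply: set_eqE => x; split; first by case=> _ [y iy ->] ->; exists y; rewrite ?mulmxA.
by case=> y iy ->; exists (g *m y); [exists y | rewrite mulmxA].
Qed.

Lemma latt_mul_sub g X : intmx X -> set_sub (latt (g *m X)) (latt g).
Proof. by move=> iX x [y iy ->]; exists (X *m y); [apply: intmx_mulcol | rewrite mulmxA]. Qed.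

Lemma latt_subP g h : g \in unitmx -> set_sub (latt h) (latt g) ->
  exists2 X, intmx X & h = g *m X.
Proof.
move=> g_unit sub; exists (invmx g *m h); last by rewrite mulKVmx.
move=> i j; have [y iy e] : latt g (h *m delta_mx j 0).
  apply: sub; exists (delta_mx j 0) => // k.
  by rewrite mxE; case: (_ && _); [apply: integral1 | apply: integral0].
have -> : (invmx g *m h) i j = (invmx g *m (h *m (delta_mx j 0 : 'cV_2))) i 0.
  by rewrite mulmxA -colE [in RHS]mxE.
by rewrite e mulKmx.
Qed.

Lemma unitmx_det_neq0 (g : 'M[K]_2) : g \in unitmx -> \det g != 0.
Proof. by rewrite unitmxE unitfE. Qed.

Lemma latt_mul_unimod g X : intmx X -> \det X != 0 -> v (\det X) = 0 ->
  latt (g *m X) = latt g.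
Proof.
move=> iX dX0 vdX; apply: set_eqE => x; split; first exact: latt_mul_sub.
have detX : \det X = X 0 0 * X 1 1 - X 0 1 * X 1 0 by rewrite {1}(mx22E X) det_mx22.
pose Y := (\det X)^-1 *: mx22 (X 1 1) (- X 0 1) (- X 1 0) (X 0 0).
have XY : X *m Y = 1%:M.
  rewrite /Y -scalemxAr.
  have -> : X *m mx22 (X 1 1) (- X 0 1) (- X 1 0) (X 0 0) = (\det X)%:M.
    by rewrite detX {1}(mx22E X) mul_mx22_adj.
  by rewrite scale_scalar_mx mulVf.
have iY : intmx Y.
  move=> i k; rewrite mxE; apply: integralM.
    by right; rewrite valV ?vdX.
  by apply: intmx22 => //; apply: integralN.
by move=> gx; apply: (latt_mul_sub iY); rewrite -mulmxA XY mulmx1.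
Qed.

Lemma latt_scale_unit g u : u != 0 -> v u = 0 -> latt (u *: g) = latt g.
Proof.
move=> u0 vu; rewrite -mul_mx_scalar latt_mul_unimod //.
- by move=> i j; rewrite mxE; case: (_ == _); [right; rewrite vu | apply: integral0].
- by rewrite det_scalar expf_neq0.
- by rewrite det_scalar val_sqr // vu.
Qed.

Lemma latt_diag_sub g a b a' b' : g \in unitmx ->
  a != 0 -> b != 0 -> a' != 0 -> b' != 0 ->
  set_sub (latt (g *m diag2 a b)) (latt (g *m diag2 a' b')) <->
  v a' <= v a /\ v b' <= v b.
Proof.
move=> g_unit a0 b0 a'0 b'0; split=> [sub|[le_a le_b]].
  have gD_unit : g *m diag2 a' b' \in unitmx by rewrite unitmx_mul g_unit unitmx22_diag.
  have [X iX] := latt_subP gD_unit sub.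
  rewrite -mulmxA => /(can_inj (mulKmx g_unit))/matrixP eqX.
  have := eqX 0 0; have := eqX 1 1; rewrite (mx22E X) !mul_mx22 !mxE /=.
  rewrite !mul0r !addr0 !add0r => eb ea.
  have Xa0 : X 0 0 != 0 by apply: contraNneq a0 => X0; rewrite ea X0 mulr0.
  have Xb0 : X 1 1 != 0 by apply: contraNneq b0 => X0; rewrite eb X0 mulr0.
  have := integral_val Xa0 (iX 0 0); have := integral_val Xb0 (iX 1 1).
  by rewrite ea eb !valM //; split; lia.
have -> : diag2 a b = diag2 a' b' *m diag2 (a / a') (b / b').
  by rewrite mul_mx22; congr mx22; field.
rewrite mulmxA; apply/latt_mul_sub/intmx_diag; right;
  by rewrite valM ?invr_neq0 // valV //; lia.
Qed.

Definition covol (A : vset K) (r : int) :=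
  exists2 g, g \in unitmx & A = latt g /\ v (\det g) = r.

Lemma covol_exists A : is_lattice v A -> exists r, covol A r.
Proof. by case/latticeE=> g g_unit ->; exists (v (\det g)); exists g. Qed.

Lemma covol_sub A B r s : covol A r -> covol B s -> set_sub B A ->
  r <= s /\ (r = s -> B = A).
Proof.
case=> g g_unit [-> <-] [h h_unit [-> <-]] sub.
have [X iX eh] := latt_subP g_unit sub.
have dX0 : \det X != 0.
  by move: (unitmx_det_neq0 h_unit); rewrite eh det_mulmx mulf_eq0 negb_or => /andP[].
have vdh : v (\det h) = v (\det g) + v (\det X).
  by rewrite eh det_mulmx valM // unitmx_det_neq0.
have := integral_val dX0 (intmx_det iX); split; first by rewrite vdh; lia.
by move=> e; rewrite eh latt_mul_unimod //; move: vdh; rewrite -e; lia.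
Qed.

Lemma covol_uniq A r s : covol A r -> covol A s -> r = s.
Proof.
move=> Ar As; have [le_rs _] := covol_sub Ar As (fun x Ax => Ax).
by have [le_sr _] := covol_sub As Ar (fun x Ax => Ax); apply/le_anti/andP.
Qed.

Lemma covol_ssub A B r s : covol A r -> covol B s -> set_ssub B A -> r < s.
Proof.
move=> Ar Bs [sub [x Ax nBx]]; have [le_rs eq_rs] := covol_sub Ar Bs sub.
by rewrite lt_neqAle le_rs andbT; apply/eqP => /eq_rs eqBA; rewrite eqBA in nBx.
Qed.

Lemma covol_scale A r c : covol A r -> c != 0 -> covol (scale_set c A) (r + 2 * v c).
Proof.
case=> g g_unit [-> <-] c0; exists (c *: g); first by rewrite unitmxZ ?unitfE.
by rewrite scale_latt detZ valM ?expf_neq0 ?unitmx_det_neq0 // val_sqr // addrC.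
Qed.

Lemma covol_act A r j : covol A r -> j \in unitmx ->
  covol (act_set j A) (r + v (\det j)).
Proof.
case=> g g_unit [-> <-] j_unit; exists (j *m g); first by rewrite unitmx_mul j_unit.
by rewrite act_latt det_mulmx valM ?unitmx_det_neq0 // addrC.
Qed.

Lemma scale_set_val A c : is_lattice v A -> c != 0 ->
  scale_set c A = scale_set (pi ^ v c) A.
Proof.
case/latticeE=> g _ -> c0; rewrite !scale_latt.
have u0 : c / pi ^ v c != 0 by rewrite mulf_neq0 ?invr_neq0 ?expfz_p_neq0.
rewrite -[c in c *: g](divfK (expfz_p_neq0 (v c))) -scalerA (latt_scale_unit _ u0) //.
by rewrite valM ?invr_neq0 ?expfz_p_neq0 // valV ?expfz_p_neq0 // val_expfz_p; lia.
Qed.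

Lemma bt_path_sandwich n A B : is_lattice v A -> bt_path p v n A B ->
  exists u w : int, [/\ set_sub B (scale_set (pi ^ u) A),
                        set_sub (scale_set (pi ^ w) A) B & w - u <= n].
Proof.
elim: n A => [|n IHn] A lA /=.
  case=> c c0 /set_eqE ->; rewrite scale_set_val //.
  by exists (v c), (v c); split=> //; lia.
case=> A1 [lA1 [A2 [lA2 [c c0 /set_eqE eA2] [subA2 _] [sub2A _]]] path1].
have [u [w [subB supB le_wu]]] := IHn A1 lA1 path1.
rewrite scale_set_val // in eA2.
have eA1 : A1 = scale_set (pi ^ (- v c)) A2.
  by rewrite eA2 scale_setM -expfzDr ?p_neq0 // addNr expr0z scale_set1.
exists (u - v c), (w - v c + 1); split; last by lia.
  apply: (set_sub_trans subB); rewrite eA1 scale_setM -expfzDr ?p_neq0 //.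
  exact: scale_set_sub.
apply: (@set_sub_trans _ _ (scale_set (pi ^ (w - v c)) A2)); last first.
  by rewrite eA2 scale_setM -expfzDr ?p_neq0 // subrK.
by rewrite expfzDr ?p_neq0 // -scale_setM expr1z; apply: scale_set_sub.
Qed.

Lemma adj_covol a b r s : adj p v a b -> covol a r -> covol b s ->
  exists2 d : K, d != 0 & [/\ set_sub (scale_set d b) a,
    set_sub (scale_set pi a) (scale_set d b) & r + 1 = s + 2 * v d].
Proof.
case=> b' [lb' [d d0 /set_eqE eb'] ssub_pa ssub_a] ar bs; exists d => //.
rewrite -eb'; split; [by case: ssub_a | by case: ssub_pa |].
have [r' b'r'] := covol_exists lb'.
have lt_rr' := covol_ssub ar b'r' ssub_a.
have := covol_ssub b'r' (covol_scale ar p_neq0) ssub_pa; rewrite val_p.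
rewrite eb' in b'r'; have := covol_uniq b'r' (covol_scale bs d0).
lia.
Qed.

Lemma adj_covol_sym a b r s : adj p v a b -> covol a r -> covol b s ->
  exists2 d : K, d != 0 & set_sub (scale_set d a) b /\ s + 1 = r + 2 * v d.
Proof.
move=> adj_ab ar bs; have [d d0 [_ sub_pa e]] := adj_covol adj_ab ar bs.
have dp0 : d^-1 * pi != 0 by rewrite mulf_neq0 ?invr_neq0.
exists (d^-1 * pi) => //; split.
  by rewrite -scale_setM -(scale_setK b d0); apply: scale_set_sub.
by rewrite valM ?invr_neq0 // valV // val_p; lia.
Qed.

Section FixedPointBound.
Variables (j : 'M[K]_2) (alpha : int).
Hypothesis j_unit : j \in unitmx.
Hypothesis val_det_j : v (\det j) = alpha.

Lemma path_jsub_le_mL L m a k (t : int) : is_mL p j L m -> is_lattice v L ->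
  bt_path p v k L a -> set_sub (act_set j a) (scale_set (pi ^ t) a) ->
  t - k%:Z <= m.
Proof.
move=> [_ mL_max] lL path_La sub_ja.
have [u [w [sub_u sub_w le_wu]]] := bt_path_sandwich lL path_La.
suff : jsub p j L (t + u - w) by move/mL_max; lia.
move=> _ [y Ly ->].
have [z az ez] : scale_set (pi ^ t) a (j *m (pi ^ w *: y)).
  by apply: sub_ja; exists (pi ^ w *: y) => //; apply: sub_w; exists y.
have [z' Lz' ez'] := sub_u _ az; exists z' => //.
have -> : j *m y = pi ^ (- w) *: (j *m (pi ^ w *: y)).
  by rewrite -scalemxAr scalerA -expfzDr ?p_neq0 // addNr expr0z scale1r.
by rewrite ez ez' !scalerA -!expfzDr ?p_neq0 //; congr (_ ^ _ *: _); lia.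
Qed.

(* From [j a = c b] and [d b <= a] we get [j a <= (c/d) a], and comparing covolumes gives
   [2 v (c/d) = alpha - e]. *)
Lemma act_homot_bound L m a b k (d : K) (e r s : int) :
  is_mL p j L m -> is_lattice v L -> bt_path p v k L a ->
  covol a r -> covol b s -> is_lattice v a -> d != 0 ->
  homot b (act_set j a) -> set_sub (scale_set d b) a -> r + e = s + 2 * v d ->
  alpha - e - 2 * m <= 2 * k%:Z.
Proof.
move=> mL lL path_La ar bs la d0 [c c0 /set_eqE ja] sub_b e_rs.
have := covol_act ar j_unit; rewrite ja val_det_j => /covol_uniq/(_ (covol_scale bs c0)).
have cd0 : c / d != 0 by rewrite mulf_neq0 ?invr_neq0.
have sub_ja : set_sub (act_set j a) (scale_set (pi ^ v (c / d)) a).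
  rewrite -scale_set_val // ja.
  have -> : scale_set c b = scale_set (c / d) (scale_set d b) by rewrite scale_setM divfK.
  exact: scale_set_sub.
have := path_jsub_le_mL mL lL path_La sub_ja.
by rewrite valM ?invr_neq0 // valV //; lia.
Qed.

Lemma bt_fixed_dist_lb L m P k : is_mL p j L m -> is_lattice v L ->
  is_btpoint p v P -> bt_fixed j P -> pdist2 p v L P k -> alpha - 2 * m <= k%:Z.
Proof.
move=> mL lL.
have vertex a k' : is_lattice v a -> bt_path p v k' L a ->
    homot a (act_set j a) -> alpha - 2 * m <= 2 * k'%:Z.
  move=> la path_La fa; have [r ar] := covol_exists la.
  have := @act_homot_bound L m a a k' 1 0 r r mL lL path_La ar ar la (oner_neq0 K) fa.
  by rewrite scale_set1 val1 => /(_ (fun x ax => ax)); lia.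
case: P => [a|a b] /=.
  by move=> la fa [k' [path_La _] ->]; have := vertex a k' la path_La fa; lia.
move=> [la lb adj_ab] fab [ka [kb [[path_La _] [path_Lb _] ->]]].
case: fab => [[fa fb]|[fba fab]].
  by have := vertex a ka la path_La fa; have := vertex b kb lb path_Lb fb; lia.
have [r ar] := covol_exists la; have [s bs] := covol_exists lb.
have [d d0 [sub_ba _ e_ab]] := adj_covol adj_ab ar bs.
have [d' d'0 [sub_ab e_ba]] := adj_covol_sym adj_ab ar bs.
have := act_homot_bound mL lL path_La ar bs la d0 fba sub_ba e_ab.
have := act_homot_bound mL lL path_Lb bs ar lb d'0 fab sub_ab e_ba.
lia.
Qed.

End FixedPointBound.

Section Apartment.
Variable G : 'M[K]_2.
Hypothesis G_unit : G \in unitmx.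

Definition apt (a b : int) := latt (G *m diag2 (pi ^ a) (pi ^ b)).

Definition lam (i : int) := apt i 0.

Lemma apt_lattice a b : is_lattice v (apt a b).
Proof. by apply: latt_lattice; rewrite unitmx_mul G_unit unitmx22_diag ?expfz_p_neq0. Qed.

Lemma apt_sub a b a' b' : set_sub (apt a b) (apt a' b') <-> a' <= a /\ b' <= b.
Proof. by rewrite latt_diag_sub ?expfz_p_neq0 // !val_expfz_p. Qed.

Lemma scale_apt u a b : scale_set (pi ^ u) (apt a b) = apt (u + a) (u + b).
Proof. by rewrite scale_latt scalemxAr scale_mx22 !mulr0 -!expfzDr ?p_neq0. Qed.

Lemma apt00 : apt 0 0 = latt G.
Proof. by rewrite /apt /diag2 expr0z -mx22_1 mulmx1. Qed.

Lemma lam_adj i : adj p v (lam i) (lam (i + 1)).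
Proof.
exists (lam (i + 1)); split; first exact: apt_lattice.
- by exists 1; rewrite ?oner_neq0 ?scale_set1.
- rewrite -[pi]expr1z scale_apt addr0; apply: set_ssubP; first by apply/apt_sub; lia.
  by move/apt_sub; lia.
- by apply: set_ssubP; [apply/apt_sub | move/apt_sub]; lia.
Qed.

Lemma lam_path (i : int) (n : nat) : bt_path p v n (lam i) (lam (i + n%:Z)).
Proof.
elim: n i => [|n IHn] i /=; first by rewrite addr0; exists 1; rewrite ?oner_neq0 ?scale_set1.
exists (lam (i + 1)); split; [exact: apt_lattice | exact: lam_adj |].
by rewrite (_ : i + n.+1%:Z = i + 1 + n%:Z) //; lia.
Qed.

Lemma lam_vdist (i : nat) : vdist p v (latt G) (lam i) i.
Proof.
split; first by rewrite -apt00; have := lam_path 0 i; rewrite add0r.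
move=> k lt_ki path_k; have := bt_path_sandwich (latt_lattice G_unit) path_k.
rewrite -apt00 => -[u [w []]]; rewrite !scale_apt.
by move=> /apt_sub[_ ?] /apt_sub[? _]; lia.
Qed.

Section Involution.
Variables (j : 'M[K]_2) (eps : K) (kn : nat) (m : int).
Hypotheses (eps_neq0 : eps != 0) (val_eps : v eps = 0).
Hypothesis jG : j *m G = pi ^ m *: (G *m mx22 0 (eps * pi ^ kn%:Z) 1 0).

Lemma act_lam i : act_set j (lam i) = scale_set (pi ^ (m + i)) (lam (kn%:Z - i)).
Proof.
rewrite /lam scale_apt {1}/apt act_latt mulmxA jG -scalemxAl -mulmxA.
have -> : mx22 0 (eps * pi ^ kn%:Z) 1 0 *m diag2 (pi ^ i) (pi ^ 0) =
          diag2 (pi ^ kn%:Z) (pi ^ i) *m mx22 0 eps 1 0.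
  by rewrite !mul_mx22 expr0z; congr mx22; ring.
rewrite mulmxA -scale_latt (@latt_mul_unimod _ (mx22 0 eps 1 0)); last 3 first.
- apply: intmx22; try exact: integral0; last exact: integral1.
  by right; rewrite val_eps.
- by rewrite det_mx22 mul0r mulr1 sub0r oppr_eq0.
- by rewrite det_mx22 mul0r mulr1 sub0r valN.
by rewrite -/(apt kn%:Z i) scale_apt; congr apt; lia.
Qed.

Lemma apartment_fixed_point : exists P : btpoint K,
  [/\ is_btpoint p v P, bt_fixed j P & pdist2 p v (latt G) P kn].
Proof.
have ekn := odd_double_half kn; set l := kn./2 in ekn.
have homot_lam i i' : (i + i')%N = kn -> homot (lam i') (act_set j (lam i)).
  move=> e; exists (pi ^ (m + i%:Z)); rewrite ?expfz_p_neq0 // act_lam.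
  by rewrite (_ : kn%:Z - i%:Z = i') //; lia.
case: (odd kn) ekn => /= ekn.
  exists (BMid (lam l) (lam l.+1)); split.
  - split; [exact: apt_lattice | exact: apt_lattice |].
    have -> : l.+1%:Z = l%:Z + 1 by lia.
    exact: lam_adj.
  - by right; split; [apply: (homot_lam l l.+1) | apply: (homot_lam l.+1 l)]; lia.
  - by exists l, l.+1; split; try exact: lam_vdist; lia.
exists (BVert (lam l)); split; first exact: apt_lattice.
  by apply: homot_lam; lia.
by exists l; [exact: lam_vdist | lia].
Qed.

End Involution.
End Apartment.

Lemma trace0_normal_form (M : 'M[K]_2) : \tr M = 0 -> \det M != 0 ->
  exists (m : int) (a b c : K),
    [/\ M = pi ^ m *: mx22 a b c (- a), integral v a, integral v b, integral v c &
        [\/ is_Zp_unit v a, is_Zp_unit v b | is_Zp_unit v c]].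
Proof.
move=> trM detM0; set s := [:: M 0 0; M 0 1; M 1 0].
have M11 : M 1 1 = - M 0 0.
  by apply/eqP; rewrite -addr_eq0 addrC; move: trM; rewrite {1}(mx22E M) tr_mx22 => ->.
have : has (fun x => x != 0) s.
  rewrite /= orbF; apply: contraNT detM0.
  move=> /norP[/negPn/eqP M00 /norP[/negPn/eqP M01 /negPn/eqP M10]].
  by rewrite (mx22E M) det_mx22 M11 M00 M01 M10 !mul0r subrr.
case/has_min_val => x /andP[xs x0] xmin.
pose f y := pi ^ (- v x) * y.
have fint y : y \in s -> integral v (f y).
  have [->|y0 ys] := eqVneq y 0; first by rewrite /f mulr0; left.
  by right; rewrite valM ?expfz_p_neq0 // val_expfz_p; have := xmin y ys y0; lia.
have fx : is_Zp_unit v (f x).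
  by split; rewrite ?mulf_neq0 ?expfz_p_neq0 // valM ?expfz_p_neq0 // val_expfz_p; lia.
exists (v x), (f (M 0 0)), (f (M 0 1)), (f (M 1 0)); split.
- rewrite {1}(mx22E M) scale_mx22 M11 /f mulrN !mulrA -!expfzDr ?p_neq0 //.
  by rewrite subrr expr0z !mul1r.
- by apply: fint; rewrite mem_head.
- by apply: fint; rewrite !inE eqxx orbT.
- by apply: fint; rewrite !inE eqxx !orbT.
by move: xs fx; rewrite !inE => /or3P[] /eqP->; [apply: Or31 | apply: Or32 | apply: Or33].
Qed.

Lemma is_mL_latt g j N m i0 j0 : g \in unitmx ->
  j *m g = g *m (pi ^ m *: N) -> intmx N -> is_Zp_unit v (N i0 j0) ->
  is_mL p j (latt g) m.
Proof.
move=> g_unit jg iN [N0 vN]; rewrite /is_mL /jsub act_latt scale_latt jg.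
rewrite -scalemxAr scalemxAl; split; first exact: latt_mul_sub.
move=> r; rewrite scale_latt => sub; have pg_unit : pi ^ r *: g \in unitmx.
  by rewrite unitmxZ ?unitfE ?expfz_p_neq0.
have [X iX] := latt_subP pg_unit sub.
rewrite -!scalemxAl !scalemxAr => /(can_inj (mulKmx g_unit))/matrixP/(_ i0 j0).
rewrite !mxE => eN.
have X0 : X i0 j0 != 0.
  apply: contraNneq N0 => X0; move: eN; rewrite X0 mulr0 => /eqP.
  by rewrite mulf_eq0 (negbTE (expfz_p_neq0 _)).
have := integral_val X0 (iX i0 j0); have := congr1 v eN.
by rewrite !valM ?expfz_p_neq0 // !val_expfz_p vN addr0 => ->; rewrite lerDl.
Qed.

Lemma trace0_offdiag_unit a b c : integral v b -> integral v c ->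
  [\/ is_Zp_unit v a, is_Zp_unit v b | is_Zp_unit v c] ->
  a * a + b * c != 0 -> 0 < v (a * a + b * c) ->
  is_Zp_unit v b \/ is_Zp_unit v c.
Proof.
move=> ib ic + s0 vs; case=> [[a0 va]|ub|uc]; [| by left | by right].
have [bc0|bc0] := eqVneq (b * c) 0; first by move: vs; rewrite bc0 addr0 valM // va.
have b0 : b != 0 by apply: contraNneq bc0 => ->; rewrite mul0r.
have c0 : c != 0 by apply: contraNneq bc0 => ->; rewrite mulr0.
have [vb|vb] := eqVneq (v b) 0; first by left.
have [vc|vc] := eqVneq (v c) 0; first by right.
exfalso; have := integral_val b0 ib; have := integral_val c0 ic.
have := valD_lt (mulf_neq0 a0 a0) bc0 s0; rewrite !valM // va.
by move: vb vc vs; set x := v b; set y := v c; set z := v (_ + _); lia.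
Qed.

Lemma trace0_companion a b c : integral v a -> integral v b -> integral v c ->
  is_Zp_unit v b \/ is_Zp_unit v c ->
  exists2 X, [/\ intmx X, \det X != 0 & v (\det X) = 0] &
    mx22 a b c (- a) *m X = X *m mx22 0 (a * a + b * c) 1 0.
Proof.
move=> ia ib ic [[b0 vb]|[c0 vc]].
  exists (mx22 0 b 1 (- a)); last by rewrite !mul_mx22; congr mx22; ring.
  rewrite det_mx22 mul0r mulr1 sub0r oppr_eq0 valN //; split=> //.
  by apply: intmx22 => //; [apply: integral0 | apply: integral1 | apply: integralN].
exists (mx22 1 a 0 c); last by rewrite !mul_mx22; congr mx22; ring.
rewrite det_mx22 mul1r mulr0 subr0; split=> //.
by apply: intmx22 => //; [apply: integral1 | apply: integral0].
Qed.

Lemma exists_fixed_point j g m a b c eps (n : nat) : g \in unitmx ->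
  j *m g = g *m (pi ^ m *: mx22 a b c (- a)) ->
  integral v a -> integral v b -> integral v c ->
  [\/ is_Zp_unit v a, is_Zp_unit v b | is_Zp_unit v c] ->
  is_Zp_unit v eps -> a * a + b * c = eps * pi ^ n%:Z ->
  exists P : btpoint K, [/\ is_btpoint p v P, bt_fixed j P & pdist2 p v (latt g) P n].
Proof.
move=> g_unit jg ia ib ic unit_abc [eps0 veps]; case: n => [|n] e_abc.
  exists (BVert (latt g)); split; first exact: latt_lattice.
    exists (pi ^ m); first exact: expfz_p_neq0.
    have detN : \det (mx22 a b c (- a)) = - eps.
      by rewrite det_mx22 -[eps]mulr1 -(expr0z pi) -e_abc; ring.
    rewrite act_latt jg -scalemxAr -scale_latt latt_mul_unimod ?detN ?oppr_eq0 ?valN //.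
    by apply: intmx22 => //; apply: integralN.
  by exists 0%N => //; split=> [|k //]; exists 1; rewrite ?oner_neq0 ?scale_set1.
have s0 : a * a + b * c != 0 by rewrite e_abc mulf_neq0 ?expfz_p_neq0.
have vs : 0 < v (a * a + b * c).
  by rewrite e_abc valM ?expfz_p_neq0 // veps val_expfz_p.
have [X [iX dX0 vdX] eX] := trace0_companion ia ib ic
  (trace0_offdiag_unit ib ic unit_abc s0 vs).
have G_unit : g *m X \in unitmx by rewrite unitmx_mul g_unit unitmxE unitfE.
have jG : j *m (g *m X) = pi ^ m *: (g *m X *m mx22 0 (eps * pi ^ n.+1%:Z) 1 0).
  by rewrite mulmxA jg -scalemxAr -scalemxAl -!mulmxA eX e_abc.
have [P [lP fP dP]] := apartment_fixed_point G_unit eps0 veps jG.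
by exists P; rewrite -(latt_mul_unimod g iX dX0 vdX).
Qed.

Lemma mL_dist_fixed_point j eps alpha g : j \in unitmx -> \tr j = 0 ->
  is_Zp_unit v eps -> - \det j = eps * pi ^ alpha -> g \in unitmx ->
  exists (m : int) (n : nat), [/\ is_mL p j (latt g) m,
    dist2_to_fixed p v j (latt g) n & alpha = 2 * m + n%:Z].
Proof.
move=> j_unit trj [eps0 veps] detj g_unit.
have val_det_j : v (\det j) = alpha.
  by rewrite -valN ?unitmx_det_neq0 // detj valM ?expfz_p_neq0 // veps val_expfz_p add0r.
pose M := invmx g *m (j *m g).
have jg : j *m g = g *m M by rewrite mulKVmx.
have trM : \tr M = 0 by rewrite mxtrace_mulC -mulmxA mulmxV // mulmx1.
have detM : \det M = \det j.
  by rewrite !det_mulmx det_inv mulrCA mulVf ?unitmx_det_neq0 // mulr1.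
have [|m [a [b [c [eM ia ib ic unit_abc]]]]] := trace0_normal_form trM.
  by rewrite detM unitmx_det_neq0.
rewrite eM in jg; have iN : intmx (mx22 a b c (- a)) by apply: intmx22 => //; apply: integralN.
have mL : is_mL p j (latt g) m.
  have mL_at i0 j0 := @is_mL_latt g j _ m i0 j0 g_unit jg iN.
  by case: unit_abc => u; [apply: (mL_at 0 0) | apply: (mL_at 0 1) | apply: (mL_at 1 0)];
    rewrite mxE.
have e_abc : a * a + b * c = eps * pi ^ (alpha - 2 * m).
  have pmK : pi ^ m * pi ^ (- m) = 1 by rewrite -expfzDr ?p_neq0 // subrr expr0z.
  have : - \det M = eps * pi ^ alpha by rewrite detM.
  rewrite eM detZ det_mx22 (_ : alpha - 2 * m = alpha + - m + - m); last by lia.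
  rewrite !expfzDr ?p_neq0 // !mulrA => <-.
  transitivity ((a * a + b * c) * (pi ^ m * pi ^ (- m)) ^+ 2); last by ring.
  by rewrite pmK expr1n mulr1.
have n_ge0 : 0 <= alpha - 2 * m.
  have s0 : a * a + b * c != 0 by rewrite e_abc mulf_neq0 ?expfz_p_neq0.
  have := integral_val s0 (integralD (integralM ia ia) (integralM ib ic)).
  by rewrite e_abc valM ?expfz_p_neq0 // veps val_expfz_p add0r.
have [n en] : exists n : nat, alpha - 2 * m = n by exists (absz (alpha - 2 * m)%R); lia.
rewrite en in e_abc; exists m, n; split=> //; last by lia.
split; first exact: exists_fixed_point g_unit jg ia ib ic unit_abc _ e_abc.
move=> P k lP fP dP.
by have := bt_fixed_dist_lb j_unit val_det_j mL (latt_lattice g_unit) lP fP dP; lia.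
Qed.

End ValuedField.

Theorem lemma2p7 (p : nat) (K : fieldType) (v : K -> int)
  (hp : prime p) (hp2 : (2 < p)%N) (hK : is_Qp p v)
  (j : 'M[K]_2) (eps : K) (alpha : int)
  (hj : j \in unitmx) (htr : \tr j = 0) (heps : is_Zp_unit v eps)
  (hdet : - \det j = eps * ((p%:R : K) ^ alpha))
  (L : vset K) (hL : is_lattice v L) :
  exists (m : int) (n : nat),
    [/\ is_mL p j L m, dist2_to_fixed p v j L n &
        (m%:~R : rat) = alpha%:~R / 2 - n%:R / 2].
Proof.
case: hK => valM valD [p_neq0 val_p] _ _.
have [g g_unit ->] := latticeE hL.
have [m [n [mL dist e]]] := mL_dist_fixed_point valM valD p_neq0 val_p hj htr heps hdet g_unit.
by exists m, n; split=> //; rewrite e intrD intrM /=; field.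
Qed.
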